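(* For any metric space $X$, $\operatorname{tHD}(X)=0$ if and only if there is no Lipschitz map from $X$ onto a non-degenerate closed interval of $\mathbb{R}$.
   Context: For a metric space $X$, the transfinite Hausdorff dimension is $\operatorname{tHD}(X)=\sup\{\operatorname{trind} f(Y): Y\subset X,\ f:Y\to Z \text{ Lipschitz},\ Z \text{ a metric space}\}$, where $\operatorname{trind}$ denotes the transfinite small inductive (topological) dimension. *)

From Stdlib Require Import Reals Lra.
Open Scope R_scope.

Record MetricSpace := {
  carrier :> Type;
  dist : carrier -> carrier -> R;
  dist_refl : forall x, dist x x = 0;
  dist_eq0 : forall x y, dist x y = 0 -> x = y;
  dist_sym : forall x y, dist x y = dist y x;
  dist_tri : forall x y z, dist x z <= dist x y + dist y z
}.
Arguments dist {m} _ _.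

Lemma Rdist_refl : forall x : R, Rabs (x - x) = 0.
Proof. intros; replace (x - x) with 0 by ring; apply Rabs_R0. Qed.
Lemma Rdist_eq0 : forall x y : R, Rabs (x - y) = 0 -> x = y.
Proof.
  intros x y H. destruct (Req_dec (x - y) 0) as [E|E]; [lra|].
  exfalso; apply (Rabs_no_R0 _ E); exact H.
Qed.
Lemma Rdist_sym : forall x y : R, Rabs (x - y) = Rabs (y - x).
Proof. intros; apply Rabs_minus_sym. Qed.
Lemma Rdist_tri : forall x y z : R, Rabs (x - z) <= Rabs (x - y) + Rabs (y - z).
Proof.
  intros; replace (x - z) with ((x - y) + (y - z)) by ring; apply Rabs_triang.
Qed.
Definition R_metric : MetricSpace :=
  {| carrier := R; dist := fun x y => Rabs (x - y);
     dist_refl := Rdist_refl; dist_eq0 := Rdist_eq0;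
     dist_sym := Rdist_sym; dist_tri := Rdist_tri |}.

Definition subset {T : Type} (A B : T -> Prop) := forall x, A x -> B x.

(* f : X -> Z is Lipschitz on the subset Y of X (only values on Y matter). *)
Definition Lipschitz_on {X Z : MetricSpace} (Y : X -> Prop) (f : X -> Z) : Prop :=
  exists L : R, 0 <= L /\
    forall x y, Y x -> Y y -> dist (f x) (f y) <= L * dist x y.

Definition image {X Z : Type} (Y : X -> Prop) (f : X -> Z) : Z -> Prop :=
  fun z => exists x, Y x /\ f x = z.

Definition rel_open {M : MetricSpace} (S A : M -> Prop) : Prop :=
  subset A S /\
  forall a, A a -> exists eps, 0 < eps /\
    forall s, S s -> dist a s < eps -> A s.

Definition rel_closed {M : MetricSpace} (S A : M -> Prop) : Prop :=
  subset A S /\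
  forall s, S s -> (forall eps, 0 < eps -> exists a, A a /\ dist s a < eps) -> A s.

(* trind S <= 0 (small transfinite inductive dimension of the subspace S),
   unfolded: every point z of S and every open neighbourhood U of z in S
   contain an open V with z in V, V subset U and trind (bd_S V) <= -1,
   i.e. bd_S V = empty, i.e. (V being open) V is also closed in S. *)
Definition trind_le_0 {M : MetricSpace} (S : M -> Prop) : Prop :=
  forall z U, S z -> rel_open S U -> U z ->
    exists V, rel_open S V /\ rel_closed S V /\ V z /\ subset V U.

(* tHD(X) = 0, i.e. sup { trind f(Y) : Y subset X, f : Y -> Z Lipschitz,
   Z metric } = 0.  As trind takes values in {-1} U Ord (trind = -1 exactly
   for the empty space), the supremum equals 0 iff every such f(Y) has
   trind <= 0 and some such f(Y) is nonempty (trind = 0). *)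
Definition tHD_eq_0 (X : MetricSpace) : Prop :=
  (forall (Z : MetricSpace) (Y : X -> Prop) (f : X -> Z),
      Lipschitz_on Y f -> trind_le_0 (image Y f)) /\
  (exists (Z : MetricSpace) (Y : X -> Prop) (f : X -> Z),
      Lipschitz_on Y f /\ exists z, image Y f z).

Definition onto_interval {X : MetricSpace} (f : X -> R_metric) (a b : R) : Prop :=
  a < b /\ (forall x, a <= f x <= b) /\
  (forall t, a <= t <= b -> exists x, f x = t).

From Pilot Require Import Defs.
From Stdlib Require Import Reals Lra Classical.
Open Scope R_scope.

(* (=>) If f : X -> [a, b] is Lipschitz and onto, then f(X) = [a, b] would
   have trind <= 0.  But [a, b] is connected: a relatively clopen subset
   containing a must contain b, so the neighbourhood [a, (a+b)/2) of a
   contains no clopen neighbourhood of a.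

   (<=) Let f : Y -> Z be L-Lipschitz, z = f(y0) in S = f(Y) and r > 0.  The
   function y |-> d(f y, z) is L-Lipschitz on Y; if it took every value of
   [0, r/2], its McShane extension to X, clamped to [0, r/2], would be a
   Lipschitz map of X onto [0, r/2].  So some radius 0 < t < r is missed, and
   the ball of radius t about z is then clopen in S.  A subspace in which
   every point has such arbitrarily small "missing radii" has trind <= 0.
   Finally X is nonempty, so the identity witnesses that tHD(X) is attained. *)

Lemma Rabs_le_between (a b : R) : Rabs a <= b -> - b <= a <= b.
Proof. unfold Rabs; destruct (Rcase_abs a); intros; lra. Qed.

Lemma dist_to_point_lip (M : MetricSpace) (z u v : M) :
  Rabs (Defs.dist u z - Defs.dist v z) <= Defs.dist u v.
Proof.
  pose proof (Defs.dist_tri _ u v z). pose proof (Defs.dist_tri _ v u z).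
  rewrite (Defs.dist_sym _ v u) in *. apply Rabs_le. lra.
Qed.

(* McShane extension: an L-Lipschitz real function on a nonempty subset Y of a
   metric space extends to an L-Lipschitz function on the whole space, namely
   h x = inf_{y in Y} (g y + L d(x, y)). *)
Section McShane.
Variables (X : MetricSpace) (Y : X -> Prop) (g : X -> R) (L : R) (y0 : X).
Hypotheses (HY0 : Y y0) (HL : 0 <= L)
  (Hlip : forall y y', Y y -> Y y' -> Rabs (g y - g y') <= L * Defs.dist y y').

(* The negatives of the quantities whose infimum defines h x. *)
Let cone_values (x : X) : R -> Prop :=
  fun v => exists y, Y y /\ v = - (g y + L * Defs.dist x y).

Lemma cone_values_bound (x : X) : bound (cone_values x).
Proof.
  exists (- (g y0 - L * Defs.dist x y0)). intros v [y [Hy ->]].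
  pose proof (Rabs_le_between _ _ (Hlip y y0 Hy HY0)).
  pose proof (Rmult_le_compat_l _ _ _ HL (Defs.dist_tri _ y x y0)).
  rewrite (Defs.dist_sym _ y x) in *. lra.
Qed.

Lemma cone_values_inhabited (x : X) : exists v, cone_values x v.
Proof. exists (- (g y0 + L * Defs.dist x y0)), y0. auto. Qed.

Definition mcshane (x : X) : R :=
  - proj1_sig (completeness _ (cone_values_bound x) (cone_values_inhabited x)).

Lemma mcshane_le (x y : X) : Y y -> mcshane x <= g y + L * Defs.dist x y.
Proof.
  intro Hy. unfold mcshane.
  destruct (completeness _ _ _) as [m Hm]; simpl; destruct Hm as [Hub _].
  assert (m >= - (g y + L * Defs.dist x y)) by (apply Rle_ge, Hub; exists y; auto).
  lra.
Qed.

Lemma mcshane_ge (x : X) (m : R) :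
  (forall y, Y y -> m <= g y + L * Defs.dist x y) -> m <= mcshane x.
Proof.
  intro Hm. unfold mcshane.
  destruct (completeness _ _ _) as [s Hs]; simpl; destruct Hs as [_ Hlub].
  assert (s <= - m).
  { apply Hlub. intros v [y [Hy ->]]. specialize (Hm y Hy). lra. }
  lra.
Qed.

Lemma mcshane_extends (y : X) : Y y -> mcshane y = g y.
Proof.
  intro Hy. apply Rle_antisym.
  - pose proof (mcshane_le y y Hy). rewrite Defs.dist_refl in *. lra.
  - apply mcshane_ge. intros y' Hy'.
    pose proof (Rabs_le_between _ _ (Hlip y y' Hy Hy')). lra.
Qed.

Lemma mcshane_lip (x x' : X) : Rabs (mcshane x - mcshane x') <= L * Defs.dist x x'.
Proof.
  assert (Hhalf : forall u v, mcshane v - L * Defs.dist u v <= mcshane u).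
  { intros u v. apply mcshane_ge. intros y Hy.
    pose proof (mcshane_le v y Hy).
    pose proof (Rmult_le_compat_l _ _ _ HL (Defs.dist_tri _ v u y)).
    rewrite (Defs.dist_sym _ v u) in *. lra. }
  pose proof (Hhalf x x'). pose proof (Hhalf x' x).
  rewrite (Defs.dist_sym _ x' x) in *. apply Rabs_le. lra.
Qed.
End McShane.

Definition clamp (a b t : R) : R := Rmax a (Rmin b t).

Lemma clamp_range (a b t : R) : a <= b -> a <= clamp a b t <= b.
Proof. unfold clamp, Rmax, Rmin; repeat destruct Rle_dec; lra. Qed.

Lemma clamp_id (a b t : R) : a <= t <= b -> clamp a b t = t.
Proof. unfold clamp, Rmax, Rmin; repeat destruct Rle_dec; lra. Qed.

Lemma clamp_lip (a b s t : R) : Rabs (clamp a b s - clamp a b t) <= Rabs (s - t).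
Proof.
  unfold clamp, Rmax, Rmin. apply Rabs_le.
  unfold Rabs; destruct Rcase_abs; repeat destruct Rle_dec; lra.
Qed.

(* Connectedness of [a, b]: a relatively clopen subset containing a contains b.
   The supremum c of the t such that [a, t] lies in V is in V by closedness,
   and openness at c forces c = b. *)
Lemma interval_clopen_contains_right_end (S V : R_metric -> Prop) (a b : R) :
  a <= b -> (forall t, S t <-> a <= t <= b) ->
  rel_open S V -> rel_closed S V -> V a -> V b.
Proof.
  intros Hab HS [_ Hopen] [_ Hclosed] Va.
  set (W := fun t => a <= t <= b /\ forall u, a <= u <= t -> V u).
  assert (Wa : W a).
  { split; [lra|]. intros u Hu. replace u with a by lra. exact Va. }
  assert (Wbound : bound W) by (exists b; intros t [Ht _]; lra).
  destruct (completeness W Wbound (ex_intro _ a Wa)) as [c [Hub Hlub]].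
  assert (Hac : a <= c) by (apply Hub; exact Wa).
  assert (Hcb : c <= b) by (apply Hlub; intros t [Ht _]; lra).
  assert (Hbelow : forall u, a <= u < c -> V u).
  { intros u Hu. apply NNPP. intro Hnot.
    assert (c <= u); [|lra].
    apply Hlub. intros w [Hw Hsub]. destruct (Rle_lt_dec w u); [lra|].
    exfalso. apply Hnot, Hsub. lra. }
  assert (Vc : V c).
  { destruct (Req_dec c a) as [->|Hca]; [exact Va|].
    apply Hclosed; [apply HS; lra|]. intros eps Heps.
    exists (Rmax a (c - eps / 2)). simpl.
    unfold Rmax; destruct Rle_dec; split; try (apply Hbelow; lra);
      apply Rabs_def1; lra. }
  destruct (Hopen c Vc) as [e [He Hball]].
  assert (Wnext : W (Rmin (c + e / 2) b)).
  { unfold Rmin; destruct Rle_dec; split; try lra; intros u Hu;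
      (destruct (Rlt_le_dec u c); [apply Hbelow; lra|]);
      (apply Hball; [apply HS; lra | simpl; apply Rabs_def1; lra]). }
  apply Hub in Wnext. destruct (Req_dec c b) as [<-|]; [exact Vc|].
  unfold Rmin in Wnext; destruct Rle_dec in Wnext; lra.
Qed.

Lemma interval_not_trind_le_0 (S : R_metric -> Prop) (a b : R) :
  a < b -> (forall t, S t <-> a <= t <= b) -> ~ trind_le_0 S.
Proof.
  intros Hab HS Hdim.
  set (U := fun t : R_metric => S t /\ t < (a + b) / 2).
  assert (HU : rel_open S U).
  { split; [intros t [Ht _]; exact Ht|].
    intros t [Ht Hlt]. exists ((a + b) / 2 - t). split; [lra|].
    intros s Hs Hd. split; [exact Hs|]. apply Rabs_def2 in Hd. lra. }
  destruct (Hdim a U) as [V [Vopen [Vclosed [Va HVU]]]];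
    [apply HS; lra | exact HU | split; [apply HS|]; lra |].
  destruct (HVU b (interval_clopen_contains_right_end S V a b
                     (Rlt_le _ _ Hab) HS Vopen Vclosed Va)).
  lra.
Qed.

(* A subspace S in which, around each point z, arbitrarily small radii t are
   not realized as distances to z has trind <= 0: the open t-ball about z is
   then also closed in S. *)
Lemma missing_radii_trind_le_0 (Z : MetricSpace) (S : Z -> Prop) :
  (forall z r, S z -> 0 < r ->
     exists t, 0 < t < r /\ forall s, S s -> Defs.dist s z <> t) ->
  trind_le_0 S.
Proof.
  intros Hmiss z U Sz [_ HUopen] Uz.
  destruct (HUopen z Uz) as [r [Hr Hball]].
  destruct (Hmiss z r Sz Hr) as [t [Ht Hnot]].
  exists (fun s => S s /\ Defs.dist s z < t). split; [|split; [|split]].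
  - split; [intros s [Hs _]; exact Hs|].
    intros s [Hs Hd]. exists (t - Defs.dist s z). split; [lra|].
    intros s' Hs' Hd'. split; [exact Hs'|].
    pose proof (Defs.dist_tri _ s' s z). rewrite (Defs.dist_sym _ s' s) in *. lra.
  - split; [intros s [Hs _]; exact Hs|].
    intros s Hs Happrox. split; [exact Hs|].
    destruct (Rtotal_order (Defs.dist s z) t) as [Hlt|[Heq|Hgt]];
      [exact Hlt | destruct (Hnot s Hs Heq) |].
    destruct (Happrox (Defs.dist s z - t)) as [u [[_ Hu] Hsu]]; [lra|].
    pose proof (Defs.dist_tri _ s u z). lra.
  - split; [exact Sz|]. rewrite Defs.dist_refl. lra.
  - intros s [Hs Hd]. apply Hball; [exact Hs|]. rewrite Defs.dist_sym. lra.
Qed.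

(* If the distances from z = f(y0) to the points of a Lipschitz image f(Y)
   fill [0, r], then X maps Lipschitz onto [0, r]: extend y |-> d(f y, z)
   by McShane and clamp to [0, r]. *)
Lemma filled_radii_onto_interval (X Z : MetricSpace) (Y : X -> Prop)
  (f : X -> Z) (y0 : X) (r : R) :
  Lipschitz_on Y f -> Y y0 -> 0 < r ->
  (forall t, 0 <= t <= r -> exists y, Y y /\ Defs.dist (f y) (f y0) = t) ->
  exists h : X -> R_metric,
    Lipschitz_on (fun _ => True) h /\ onto_interval h 0 r.
Proof.
  intros [L [HL Hf]] Hy0 Hr Hfill.
  set (g := fun x => Defs.dist (f x) (f y0)).
  assert (Hglip : forall y y', Y y -> Y y' -> Rabs (g y - g y') <= L * Defs.dist y y').
  { intros y y' Hy Hy'.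
    exact (Rle_trans _ _ _ (dist_to_point_lip _ _ _ _) (Hf y y' Hy Hy')). }
  set (ext := mcshane X Y g L y0 Hy0 HL Hglip).
  exists (fun x => clamp 0 r (ext x)).
  split; [|split; [exact Hr | split]].
  - exists L. split; [exact HL|]. intros x x' _ _. simpl.
    exact (Rle_trans _ _ _ (clamp_lip _ _ _ _) (mcshane_lip _ _ _ _ _ _ _ _ _ _)).
  - intro x. apply clamp_range. lra.
  - intros t Ht. destruct (Hfill t Ht) as [y [Hy Hgy]]. exists y.
    unfold ext. rewrite mcshane_extends by exact Hy.
    fold (g y) in Hgy. rewrite Hgy. apply clamp_id, Ht.
Qed.

Lemma lipschitz_image_missing_radii (X Z : MetricSpace) (Y : X -> Prop)
  (f : X -> Z) :
  ~ (exists (h : X -> R_metric) (a b : R),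
       Lipschitz_on (fun _ => True) h /\ onto_interval h a b) ->
  Lipschitz_on Y f ->
  forall z r, image Y f z -> 0 < r ->
    exists t, 0 < t < r /\ forall s, image Y f s -> Defs.dist s z <> t.
Proof.
  intros Hno Hf z r [y0 [Hy0 <-]] Hr.
  apply NNPP. intro Hall. apply Hno.
  destruct (filled_radii_onto_interval X Z Y f y0 (r / 2) Hf Hy0)
    as [h Hh]; [lra| |exists h, 0, (r / 2); exact Hh].
  intros t Ht. apply NNPP. intro Hmissed. apply Hall.
  assert (Ht0 : t <> 0).
  { intros ->. apply Hmissed. exists y0. split; [exact Hy0|]. apply Defs.dist_refl. }
  exists t. split; [lra|].
  intros s [y [Hy <-]] Hdist. apply Hmissed. exists y. auto.
Qed.

Theorem lemma4p6 (X : MetricSpace) (Hne : inhabited X) :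
  tHD_eq_0 X <->
  ~ (exists (f : X -> R_metric) (a b : R),
       Lipschitz_on (fun _ => True) f /\ onto_interval f a b).
Proof.
  split.
  - intros [Hdim _] [f [a [b [Hf [Hab [Hrange Honto]]]]]].
    apply (interval_not_trind_le_0 (image (fun _ => True) f) a b Hab).
    + intro t. split; [intros [x [_ <-]]; apply Hrange|].
      intro Ht. destruct (Honto t Ht) as [x Hx]. exists x. auto.
    + exact (Hdim R_metric _ f Hf).
  - intros Hno. split.
    + intros Z Y f Hf. apply missing_radii_trind_le_0.
      exact (lipschitz_image_missing_radii X Z Y f Hno Hf).
    + destruct Hne as [x0]. exists X, (fun _ => True), (fun x => x). split.
      * exists 1. split; [lra|]. intros. lra.
      * exists x0, x0. auto.
Qed.
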